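(* In the reduction instance $NTP([a_j]_{j\in A},W)$, every optimal schedule $S^*$ satisfies $B(S^* )\ge W$.
   Context: Reduction instance. Let $N\ge1$, $A=\{1,\dots,N\}$, positive integers $a_1,\dots,a_N$, positive integer $W\le\sum_{j\in A}a_j$. Set $M=N+\sum_{j\in A}a_j+1$, employees $\mathcal E=\{1,\dots,M\}$ (smaller index = more senior). For $k\in A$: $i_k=k+\sum_{j=1}^{k-1}a_j$ (critical employees), $\mathcal E^S_k=\{i: i_k<i\le i_k+a_k\}$ (stable block). Response delays: $r_{i_k}=\sum_{j=1}^{k}a_j$; for $i\in\mathcal E^S_k$, $r_i=\sum_{j=1}^{k-1}a_j$; $r_M=\sum_{j\in A}a_j$. Let $C^*_0=2\sum_j a_j$ and $H=C^*_0-W$. A schedule $S=(s_i,e_i)_{i\in\mathcal E}$ has $s_i\ge0$, $e_i=s_i+r_i$; it is feasible if $s_1\le\dots\le s_M$ and $e_i\le H$ for all $i$. $b_i=|\{j: i<j,\ e_j<e_i\}|$, $B(S)=\sum_i b_i$. A schedule is optimal if it is feasible and minimizes $B(S)$ among feasible schedules. *)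

From HB Require Import structures.
From mathcomp Require Import all_boot all_order all_algebra.
From mathcomp Require Import reals.
Set Implicit Arguments. Unset Strict Implicit. Unset Printing Implicit Defensive.
Import Order.TTheory GRing.Theory Num.Theory.

Definition prefA (a : nat -> nat) (k : nat) : nat := \sum_(1 <= j < k.+1) a j.

Definition Memp (a : nat -> nat) (N : nat) : nat := N + prefA a N + 1.

Definition crit (a : nat -> nat) (k : nat) : nat := k + prefA a k.-1.

(* C*_0 = 2 sum_j a_j and H = C*_0 - W (W <= sum_j a_j, so no truncation) *)
Definition C0 (a : nat -> nat) (N : nat) : nat := 2 * prefA a N.
Definition Hor (a : nat -> nat) (N W : nat) : nat := C0 a N - W.

Section Sched.
Variable R : realType.
Local Open Scope ring_scope.

Definition finish (r : nat -> nat) (s : nat -> R) (i : nat) : R := s i + (r i)%:R.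

Definition feasible (M : nat) (H : R) (r : nat -> nat) (s : nat -> R) : Prop :=
  [/\ (forall i, (1 <= i <= M)%N -> 0 <= s i),
      (forall i, (1 <= i < M)%N -> s i <= s i.+1) &
      (forall i, (1 <= i <= M)%N -> finish r s i <= H)].

Definition bcount (M : nat) (r : nat -> nat) (s : nat -> R) (i : nat) : nat :=
  (\sum_(i.+1 <= j < M.+1) (((finish r s j < finish r s i)%R : bool) : nat))%N.

Definition Bval (M : nat) (r : nat -> nat) (s : nat -> R) : nat :=
  (\sum_(1 <= i < M.+1) bcount M r s i)%N.

Definition optimal (M : nat) (H : R) (r : nat -> nat) (s : nat -> R) : Prop :=
  feasible M H r s /\
  (forall s' : nat -> R, feasible M H r s' -> (Bval M r s <= Bval M r s')%N).
End Sched.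

From HB Require Import structures.
From mathcomp Require Import all_boot all_order all_algebra.
From mathcomp Require Import reals.
From mathcomp Require Import lra zify.
Set Implicit Arguments. Unset Strict Implicit. Unset Printing Implicit Defensive.
Import Order.TTheory GRing.Theory Num.Theory.

(** The stable block of [i_k] consists of the [a_k] employees [j] strictly
    between [i_k] and [i_(k+1)]; they have response delay [r_(i_k) - a_k] and
    start no later than [i_(k+1)].  Hence either the start times advance by at
    least [a_k] from [i_k] to [i_(k+1)], or every one of these [a_k] employees
    finishes before [i_k] and contributes to [b_(i_k)].  Summing over [k], the
    start times advance by at most [s_M - s_1 <= H - r_M = sum_j a_j - W], so
    the blocks contribute at least [W] to [B(S)]. *)

Lemma prefA_S (a : nat -> nat) (n : nat) : prefA a n.+1 = prefA a n + a n.+1.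
Proof. by rewrite /prefA big_nat_recr. Qed.

Lemma crit1 (a : nat -> nat) : crit a 1 = 1.
Proof. by rewrite /crit /prefA big_geq. Qed.

Lemma crit_S (a : nat -> nat) (k : nat) :
  crit a k.+2 = crit a k.+1 + a k.+1 + 1.
Proof. by rewrite /crit /= prefA_S; lia. Qed.

Lemma crit_last (a : nat -> nat) (N : nat) : crit a N.+1 = Memp a N.
Proof. by rewrite /crit /Memp /=; lia. Qed.

Lemma crit_mono (a : nat -> nat) : {homo crit a : m n / m <= n}.
Proof.
apply: homo_leq => [n||[|k]]; [exact: leqnn | exact: leq_trans | |].
- by rewrite crit1 /crit /prefA big_geq.
- by rewrite crit_S; lia.
Qed.

Lemma sum_comp_incr_le (F g : nat -> nat) (n : nat) :
  (forall k, k < n -> g k < g k.+1) ->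
  \sum_(0 <= k < n) F (g k) <= \sum_(g 0 <= i < g n) F i.
Proof.
elim: n => [|n IH] g_incr; first by rewrite big_geq.
have g_mono : forall k, k <= n -> g 0 <= g k.
  elim=> [//|k IHk] kn; apply: leq_trans (IHk (ltnW kn)) (ltnW (g_incr k _)); lia.
have g0n : g 0 <= g n by exact: g_mono.
have gnS : g n <= g n.+1 by rewrite ltnW ?g_incr.
rewrite big_nat_recr //= [X in _ <= X](@big_cat_nat _ _ _ (g n)) //=.
apply: leq_add; first by apply: IH => k hk; apply: g_incr; lia.
by rewrite big_ltn ?g_incr // leq_addr.
Qed.

Lemma feasible_mono {R : realType} {M : nat} {H : R} {r : nat -> nat}
    {s : nat -> R} :
  feasible M H r s -> forall i j, 1 <= i -> i <= j -> j <= M -> (s i <= s j)%R.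
Proof.
move=> [_ s_step _] i j i1 ij jM.
apply: (homo_leq_in (D := [pred n | 1 <= n <= M]) (r := fun x y : R => (x <= y)%R));
  rewrite ?inE //=; try lia.
- by move=> ? ? ?; apply: le_trans.
- by move=> m m'; rewrite !inE /= => hm hm' k; rewrite inE /=; lia.
- by move=> n; rewrite !inE /= => hn hn'; apply: s_step; lia.
Qed.

Section Blocks.
Variables (R : realType) (N : nat) (a r : nat -> nat) (H : R) (s : nat -> R).
Local Notation M := (Memp a N).
Hypothesis r_crit : forall k, 1 <= k <= N -> r (crit a k) = prefA a k.
Hypothesis r_stable : forall k i, 1 <= k <= N ->
  crit a k < i <= crit a k + a k -> r i = prefA a k.-1.
Hypothesis s_feasible : feasible M H r s.

Definition early_finishers (k : nat) : nat :=
  \sum_((crit a k).+1 <= j < (crit a k + a k).+1)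
    ((finish r s j < finish r s (crit a k))%R : nat).

Lemma crit_le_M (k : nat) : k <= N.+1 -> crit a k <= M.
Proof. by move=> kN; rewrite -crit_last; apply: crit_mono. Qed.

Lemma early_finishers_le_bcount (k : nat) :
  1 <= k <= N -> early_finishers k <= bcount M r s (crit a k).
Proof.
case: k => [//|k] /andP [_ kN]; rewrite /early_finishers /bcount.
rewrite [X in _ <= X](@big_cat_nat _ _ _ (crit a k.+1 + a k.+1).+1) /=;
  last 2 first.
- by lia.
- by have := @crit_le_M k.+2 ltac:(lia); rewrite crit_S; lia.
exact: leq_addr.
Qed.

Lemma sum_early_finishers_le_Bval :
  \sum_(1 <= k < N.+1) early_finishers k <= Bval M r s.
Proof.
rewrite big_add1 /=.
apply: (@leq_trans (\sum_(0 <= k < N) bcount M r s (crit a k.+1))).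
  rewrite !big_nat; apply: leq_sum => k kN.
  by apply: early_finishers_le_bcount; lia.
have crit_incr : forall k, k < N -> crit a k.+1 < crit a k.+2.
  by move=> k _; rewrite crit_S; lia.
apply: leq_trans
  (@sum_comp_incr_le (bcount M r s) (fun k => crit a k.+1) N crit_incr) _.
rewrite crit1 crit_last /Bval [X in _ <= X](@big_cat_nat _ _ _ M) //=.
  exact: leq_addr.
by rewrite /Memp; lia.
Qed.

Lemma early_finishers_full (k : nat) : 1 <= k <= N ->
  (s (crit a k.+1) - s (crit a k) < (a k)%:R)%R -> early_finishers k = a k.
Proof.
case: k => [//|k] /andP [_ kN] gap.
rewrite /early_finishers (eq_big_nat _ _ (F2 := fun _ => 1)) ?sum_nat_const_nat.
  by lia.
move=> j hj; rewrite /finish (@r_stable k.+1) ?r_crit //=; try lia.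
have sj : (s j <= s (crit a k.+2))%R.
  apply: (feasible_mono s_feasible); rewrite ?crit_S; try lia.
  by have := @crit_le_M k.+2 ltac:(lia); rewrite crit_S; lia.
by rewrite prefA_S natrD; apply/eqP; rewrite eqb1; lra.
Qed.

Lemma block_gap (k : nat) : 1 <= k <= N ->
  ((a k)%:R <= (early_finishers k)%:R + (s (crit a k.+1) - s (crit a k)) :> R)%R.
Proof.
move=> hk; have [gap|gap] := ltrP (s (crit a k.+1) - s (crit a k)) (a k)%:R%R.
- have s_le : (s (crit a k) <= s (crit a k.+1))%R.
    apply: (feasible_mono s_feasible); rewrite ?crit_mono ?crit_le_M //; try lia.
    by move: hk; rewrite /crit; lia.
  by rewrite early_finishers_full //; lra.
- have : (0 <= (early_finishers k)%:R :> R)%R by apply: ler0n.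
  lra.
Qed.

Lemma prefA_le_early_finishers :
  ((prefA a N)%:R <= (\sum_(1 <= k < N.+1) early_finishers k)%:R
                     + (s M - s 1) :> R)%R.
Proof.
have := ler_sum_nat (fun k (hk : 1 <= k < N.+1) => block_gap hk).
by rewrite big_split /= telescope_sumr // crit_last crit1 -!natr_sum.
Qed.

End Blocks.

Theorem corollary4 (R : realType) (N : nat) (a : nat -> nat) (W : nat)
    (r : nat -> nat) :
  (1 <= N)%N ->
  (forall j, (1 <= j <= N)%N -> (0 < a j)%N) ->
  (0 < W)%N -> (W <= prefA a N)%N ->
  (* response delays of critical employees *)
  (forall k, (1 <= k <= N)%N -> r (crit a k) = prefA a k) ->
  (* response delays of the stable blocks E^S_k *)
  (forall k i, (1 <= k <= N)%N -> (crit a k < i <= crit a k + a k)%N ->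
      r i = prefA a k.-1) ->
  r (Memp a N) = prefA a N ->
  forall s : nat -> R,
    optimal (Memp a N) ((Hor a N W)%:R)%R r s ->
    (W <= Bval (Memp a N) r s)%N.
Proof.
move=> _ _ _ WA r_crit r_stable r_last s [feas _].
apply: leq_trans (sum_early_finishers_le_Bval N a r s); rewrite -(ler_nat R).
have gaps := prefA_le_early_finishers r_crit r_stable feas.
have [s_nonneg _ s_bounded] := feas.
have s1 := s_nonneg 1 ltac:(rewrite /Memp; lia).
have sM := s_bounded (Memp a N) ltac:(rewrite /Memp; lia).
rewrite /finish r_last /Hor /C0 mul2n -addnn natrB ?natrD in sM; last lia.
lra.
Qed.
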